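(* Let $f\in\mathbb{C}[h]$. (1) If $f\notin\mathbb{C}$ (i.e. $f$ is not a constant polynomial), then $\deg(\alpha\beta)=\deg(\alpha)+\deg(\beta)$ (addition in $\mathbb{Z}_+^2$) for all nonzero $\alpha,\beta\in\mathcal{H}(f)$. (2) The algebra $\mathcal{H}(f)$ has no zero-divisors if and only if $f\notin\mathbb{C}$.
   Context: For $f(h)\in\mathbb{C}[h]$, $\mathcal{H}(f)$ is the unital associative $\mathbb{C}$-algebra generated by $x,y,h$ with relations $hx=xf(h)$, $yh=f(h)y$, $yx-xy=f(h)-h$. The elements $x^ih^jy^k$ ($i,j,k\ge 0$) form a basis of $\mathcal{H}(f)$, so every nonzero $\alpha\in\mathcal{H}(f)$ can be uniquely written as $\alpha=x^ng(h)y^m+\sum_{(i,j)<(n,m)}x^ig_{ij}(h)y^j$ with $0\neq g\in\mathbb{C}[h]$, $g_{ij}\in\mathbb{C}[h]$, where $<$ is the lexicographic order on $\mathbb{Z}_+^2$ ($(i,j)>(i',j')$ iff $i>i'$, or $i=i'$ and $j>j'$). Then $\deg\alpha:=(n,m)$. *)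

From HB Require Import structures.
From mathcomp Require Import all_boot all_order all_algebra.
Set Implicit Arguments. Unset Strict Implicit. Unset Printing Implicit Defensive.
Import Order.TTheory GRing.Theory Num.Theory.
Local Open Scope ring_scope.

Definition peval (C : numClosedFieldType) (A : algType C) (h : A) (p : {poly C}) : A :=
  horner_alg h p.

Definition Hrel (C : numClosedFieldType) (A : algType C) (f : {poly C}) (x y h : A) : Prop :=
  [/\ h * x = x * peval h f,
      y * h = peval h f * y &
      y * x - x * y = peval h f - h].

Definition mon (C : numClosedFieldType) (A : algType C) (x y h : A) (t : nat * nat * nat) : A :=
  x ^+ t.1.1 * h ^+ t.1.2 * y ^+ t.2.

Definition PBW_basis (C : numClosedFieldType) (A : algType C) (x y h : A) : Prop :=
  (forall a : A, exists (s : seq (nat * nat * nat)) (c : nat * nat * nat -> C),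
      a = \sum_(t <- s) c t *: mon x y h t)
  /\ (forall (s : seq (nat * nat * nat)) (c : nat * nat * nat -> C),
      uniq s -> \sum_(t <- s) c t *: mon x y h t = 0 -> forall t, t \in s -> c t = 0).

Definition lexlt (a b : nat * nat) : bool :=
  (a.1 < b.1)%N || ((a.1 == b.1) && (a.2 < b.2)%N).

Definition is_deg (C : numClosedFieldType) (A : algType C) (x y h : A)
    (alpha : A) (d : nat * nat) : Prop :=
  exists (s : seq (nat * nat)) (g : nat * nat -> {poly C}),
    [/\ uniq s, d \in s, g d != 0,
        (forall t, t \in s -> t != d -> lexlt t d) &
        alpha = \sum_(t <- s) x ^+ t.1 * peval h (g t) * y ^+ t.2].

Definition is_const (C : numClosedFieldType) (f : {poly C}) : Prop :=
  exists c : C, f = c%:P.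

From HB Require Import structures.
From mathcomp Require Import all_boot all_order all_algebra.
From mathcomp Require Import zify.
Import Order.TTheory GRing.Theory Num.Theory.
Local Open Scope ring_scope.

(* Write ev p for p(h).  The relations give p(h) x = x (p o f)(h) and
   y p(h) = (p o f)(h) y, and an induction on k, j shows
     y^j x^k = x^k y^j + (terms of x-degree < k).
   Hence for the "terms" x^i p(h) y^j
     (x^i p(h) y^j) (x^k q(h) y^l)
        = x^(i+k) ((p o f^k)(h) (q o f^j)(h)) y^(j+l) + (x-degree < i+k).
   When f is not constant, composition with f preserves nonzero
   polynomials, so the leading coefficients multiply to a nonzero
   polynomial; since the lexicographic order is compatible with addition,
   all the other products are lexicographically lower, which gives (1).
   Part (2) then follows: nonzero elements have a degree (spanning part of
   the PBW basis), elements with a degree are nonzero (freeness), so (1)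
   excludes zero-divisors; and if f = c is constant, (h - c) x = 0 is a
   product of two nonzero elements. *)

Definition padd (u v : nat * nat) : nat * nat := (u.1 + v.1, u.2 + v.2)%N.
Definition lexle (u v : nat * nat) : bool := lexlt u v || (u == v).

Lemma lexlt_irr u : lexlt u u = false.
Proof. by case: u => u1 u2; rewrite /lexlt /=; lia. Qed.

Lemma lexlt_trans u v w : lexlt u v -> lexlt v w -> lexlt u w.
Proof. by case: u v w => [u1 u2] [v1 v2] [w1 w2]; rewrite /lexlt /=; lia. Qed.

Lemma lexlt_total u v : [|| lexlt u v, u == v | lexlt v u].
Proof. by case: u v => [u1 u2] [v1 v2]; rewrite /lexlt /= xpair_eqE; lia. Qed.

Lemma lexlt_fst u v : lexlt u v -> (u.1 <= v.1)%N.
Proof. by case: u v => [u1 u2] [v1 v2]; rewrite /lexlt /=; lia. Qed.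

(* The lexicographic order is compatible with addition: this is what makes
   the degree additive. *)
Lemma lexlt_padd u v d1 d2 :
  lexle u d1 -> lexle v d2 -> lexlt u d1 || lexlt v d2 ->
  lexlt (padd u v) (padd d1 d2).
Proof.
by case: u v d1 d2 => [u1 u2] [v1 v2] [a1 a2] [b1 b2];
  rewrite /lexle /lexlt /padd /= !xpair_eqE; lia.
Qed.

Lemma lexmax_exists (u : nat * nat) (s : seq (nat * nat)) :
  exists2 d, d \in u :: s & forall t, t \in u :: s -> t != d -> lexlt t d.
Proof.
elim: s u => [|v s IH] u.
  by exists u; [rewrite mem_head | move=> t; rewrite inE => /eqP ->; rewrite eqxx].
have [d dvs d_max] := IH v.
have [d_lt_u | u_le_d] := boolP (lexlt d u).
  exists u; first exact: mem_head.
  move=> t; rewrite in_cons => /predU1P [-> | tvs]; first by rewrite eqxx.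
  move=> _; have [-> // | t_neq_d] := eqVneq t d.
  exact: lexlt_trans (d_max t tvs t_neq_d) d_lt_u.
exists d; first by rewrite in_cons dvs orbT.
move=> t; rewrite in_cons => /predU1P [-> u_neq_d | tvs]; last exact: d_max.
by have := lexlt_total u d; rewrite (negbTE u_neq_d) (negbTE u_le_d) !orbF.
Qed.

Section HornerAlg.
Variables (R : comNzRingType) (A : algType R).

Lemma horner_alg_comp (a : A) (p q : {poly R}) :
  horner_alg a (p \Po q) = horner_alg (horner_alg a q) p.
Proof.
elim/poly_ind: p => [|p c IH]; first by rewrite comp_poly0 !rmorph0.
by rewrite comp_poly_MXaddC !rmorphD !rmorphM /= IH !horner_algC horner_algX.
Qed.

Lemma horner_alg_intertwine_l (a b z : A) (p : {poly R}) :
  a * z = z * b -> horner_alg a p * z = z * horner_alg b p.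
Proof.
move=> azb; elim/poly_ind: p => [|p c IH]; first by rewrite !rmorph0 mul0r mulr0.
rewrite !rmorphD !rmorphM /= !horner_algC !horner_algX mulrDl mulrDr.
by rewrite -mulrA azb mulrA IH !mulrA mulr_algl mulr_algr.
Qed.

Lemma horner_alg_intertwine_r (a b z : A) (p : {poly R}) :
  z * a = b * z -> z * horner_alg a p = horner_alg b p * z.
Proof.
move=> zab; elim/poly_ind: p => [|p c IH]; first by rewrite !rmorph0 mul0r mulr0.
rewrite !rmorphD !rmorphM /= !horner_algC !horner_algX mulrDl mulrDr.
by rewrite mulrA IH -(mulrA _ z) zab !mulrA mulr_algl mulr_algr.
Qed.

End HornerAlg.

Section HfComputations.
Context {C : numClosedFieldType} {A : algType C} {f : {poly C}} {x y h : A}.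

Local Notation ev := (horner_alg h).
Local Notation tw k := (iter k (comp_poly f)).

Hypothesis hx : h * x = x * ev f.
Hypothesis yh : y * h = ev f * y.
Hypothesis yx : y * x - x * y = ev f - h.

Lemma ev_xn (p : {poly C}) k : ev p * x ^+ k = x ^+ k * ev (tw k p).
Proof.
elim: k p => [|k IH] p; first by rewrite !expr0 mulr1 mul1r.
have ev_x q : ev q * x = x * ev (q \Po f).
  by rewrite horner_alg_comp; apply: horner_alg_intertwine_l.
by rewrite exprS mulrA ev_x -(mulrA x (ev _)) IH mulrA iterSr.
Qed.

Lemma yn_ev (p : {poly C}) k : y ^+ k * ev p = ev (tw k p) * y ^+ k.
Proof.
elim: k p => [|k IH] p; first by rewrite !expr0 mulr1 mul1r.
have y_ev q : y * ev q = ev (q \Po f) * y.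
  by rewrite horner_alg_comp; apply: horner_alg_intertwine_r.
by rewrite exprSr -mulrA y_ev mulrA IH -mulrA iterSr.
Qed.

Definition term (u : nat * nat) (p : {poly C}) : A := x ^+ u.1 * ev p * y ^+ u.2.

Inductive spanned (P : pred (nat * nat)) : A -> Prop :=
  | spanned0 : spanned P 0
  | spannedD a b : spanned P a -> spanned P b -> spanned P (a + b)
  | spanned_term u p : P u -> spanned P (term u p).

Lemma spanned_map (P Q : pred (nat * nat)) (g : A -> A) :
  g 0 = 0 -> {morph g : a b / a + b} ->
  (forall u p, P u -> spanned Q (g (term u p))) ->
  forall a, spanned P a -> spanned Q (g a).
Proof.
move=> g0 gD g_term a; elim=> [|a1 a2 _ IH1 _ IH2|u p Pu].
- by rewrite g0; exact: spanned0.
- by rewrite gD; exact: spannedD.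
- exact: g_term.
Qed.

Lemma spanned_mono (P Q : pred (nat * nat)) a :
  (forall u, P u -> Q u) -> spanned P a -> spanned Q a.
Proof. by move=> PQ; apply: (@spanned_map P Q id) => // u p /PQ; apply: spanned_term. Qed.

Lemma spanned_mull (P Q : pred (nat * nat)) c a :
  (forall u p, P u -> spanned Q (c * term u p)) -> spanned P a -> spanned Q (c * a).
Proof.
move=> c_term; apply: (@spanned_map P Q (fun b => c * b)) => //.
- exact: mulr0.
- by move=> b1 b2; rewrite mulrDr.
Qed.

Lemma spanned_mulr (P Q : pred (nat * nat)) c a :
  (forall u p, P u -> spanned Q (term u p * c)) -> spanned P a -> spanned Q (a * c).
Proof.
move=> c_term; apply: (@spanned_map P Q (fun b => b * c)) => //.
- exact: mul0r.
- by move=> b1 b2; rewrite mulrDl.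
Qed.

Local Notation lowx k := (spanned (fun u => u.1 < k)%N).

Lemma lowx_mono k k' r : (k <= k')%N -> lowx k r -> lowx k' r.
Proof. by move=> le_kk'; apply: spanned_mono => u /leq_trans; apply. Qed.

Lemma lowx_xl i k r : lowx k r -> lowx (i + k) (x ^+ i * r).
Proof.
apply: spanned_mull => u p u_lt.
have -> : x ^+ i * term u p = term (i + u.1, u.2)%N p by rewrite /term !mulrA exprD.
by apply: spanned_term; rewrite /= ltn_add2l.
Qed.

Lemma lowx_evl k p r : lowx k r -> lowx k (ev p * r).
Proof.
apply: spanned_mull => u q u_lt.
have -> : ev p * term u q = term u (tw u.1 p * q).
  by rewrite /term !mulrA ev_xn rmorphM !mulrA.
exact: spanned_term.
Qed.

Lemma lowx_r k p j r : lowx k r -> lowx k (r * (ev p * y ^+ j)).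
Proof.
apply: spanned_mulr => u q u_lt.
have -> : term u q * (ev p * y ^+ j) = term (u.1, u.2 + j)%N (q * tw u.2 p).
  by rewrite /term !mulrA -(mulrA _ (y ^+ u.2)) yn_ev rmorphM exprD !mulrA.
exact: spanned_term.
Qed.

Lemma y_xn k : exists2 r, lowx k r & y * x ^+ k = x ^+ k * y + r.
Proof.
elim: k => [|k [r r_low yxk]].
  by exists 0; [exact: spanned0 | rewrite !expr0 mulr1 mul1r addr0].
exists (x * r + term (k, 0%N) (tw k (f - 'X))).
  apply: spannedD; last exact: spanned_term.
  by have := @lowx_xl 1 k r r_low; rewrite expr1.
have yx' : y * x = x * y + (ev f - h) by rewrite -yx addrC subrK.
rewrite exprS mulrA yx' mulrDl -mulrA yxk mulrDr addrA mulrA -exprS.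
by rewrite /term /= expr0 mulr1 -ev_xn rmorphB /= horner_algX.
Qed.

Lemma lowx_yl k r : lowx k r -> lowx k (y * r).
Proof.
apply: spanned_mull => u q u_lt.
have [r' r'_low yxu] := y_xn u.1.
rewrite /term !mulrA yxu mulrDl mulrDl; apply: spannedD.
  have -> : x ^+ u.1 * y * ev q * y ^+ u.2 = term (u.1, u.2.+1) (q \Po f).
    have y_ev := yn_ev q 1; rewrite !expr1 /= in y_ev.
    by rewrite /term /= -(mulrA _ y) y_ev !mulrA -(mulrA _ y) -exprS.
  exact: spanned_term.
by rewrite -mulrA; apply: lowx_r; apply: lowx_mono r'_low; apply: ltnW.
Qed.

Lemma yn_xn j k : exists2 r, lowx k r & y ^+ j * x ^+ k = x ^+ k * y ^+ j + r.
Proof.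
elim: j => [|j [r r_low yxjk]].
  by exists 0; [exact: spanned0 | rewrite !expr0 mulr1 mul1r addr0].
have [r0 r0_low yxk] := y_xn k.
exists (r0 * y ^+ j + y * r); last first.
  by rewrite exprS -mulrA yxjk mulrDr mulrA yxk mulrDl addrA -mulrA -exprS.
apply: spannedD; last exact: lowx_yl.
by have := @lowx_r k 1 j r0 r0_low; rewrite rmorph1 mul1r.
Qed.

Lemma term_mul u p v q : exists2 r, lowx (u.1 + v.1) r &
  term u p * term v q = term (padd u v) (tw v.1 p * tw u.2 q) + r.
Proof.
have [r r_low yxvu] := yn_xn u.2 v.1.
exists (x ^+ u.1 * (ev p * (r * (ev q * y ^+ v.2)))).
  by apply: lowx_xl; apply: lowx_evl; apply: lowx_r.
have -> : term u p * term v q =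
    x ^+ u.1 * (ev p * ((y ^+ u.2 * x ^+ v.1) * (ev q * y ^+ v.2))).
  by rewrite /term !mulrA.
rewrite yxvu mulrDl mulrDr mulrDr; congr (_ + _).
rewrite -(mulrA (x ^+ v.1)) (mulrA (ev p)) ev_xn (mulrA (y ^+ u.2)) yn_ev.
by rewrite /term /padd rmorphM !exprD !mulrA.
Qed.

Local Notation below d := (spanned (fun u => lexlt u d)).

Lemma lowx_below n d r : (n <= d.1)%N -> lowx n r -> below d r.
Proof.
by move=> le_nd; apply: spanned_mono => u /= u_lt; rewrite /lexlt (leq_trans u_lt le_nd).
Qed.

Lemma spanned_mul (P Q : pred (nat * nat)) d a b :
  (forall u v, P u -> Q v -> lexlt (padd u v) d) ->
  spanned P a -> spanned Q b -> below d (a * b).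
Proof.
move=> PQ_lt a_span b_span; apply: spanned_mulr a_span => u p Pu.
apply: spanned_mull b_span => v q Qv.
have [r r_low ->] := term_mul u p v q.
apply: spannedD; first by apply: spanned_term; exact: PQ_lt.
exact: lowx_below (lexlt_fst _ _ (PQ_lt u v Pu Qv)) r_low.
Qed.

Definition canonical (P : pred (nat * nat)) (a : A) : Prop :=
  exists (s : seq (nat * nat)) (g : nat * nat -> {poly C}),
    [/\ uniq s, all P s & a = \sum_(u <- s) term u (g u)].

Lemma canonical_add_term (P : pred (nat * nat)) a u p :
  canonical P a -> P u -> canonical P (a + term u p).
Proof.
move=> [s [g [s_uniq sP ->]]] Pu.
have [us | uNs] := boolP (u \in s).
  exists s, (fun v => if v == u then g v + p else g v); split => //.
  rewrite (bigD1_seq u us s_uniq) [in RHS](bigD1_seq u us s_uniq) /= eqxx.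
  rewrite [in RHS](eq_bigr (fun v => term v (g v))) => [|v /negbTE -> //].
  by rewrite /term rmorphD mulrDr mulrDl addrAC.
exists (u :: s), (fun v => if v == u then p else g v); split.
- by rewrite /= uNs.
- by rewrite /= Pu.
rewrite big_cons eqxx addrC; congr (_ + _); apply: eq_big_seq => v vs.
by have /negbTE -> : v != u by apply: contraNneq uNs => <-.
Qed.

Lemma spanned_canonical (P : pred (nat * nat)) a : spanned P a -> canonical P a.
Proof.
have canonical0 : canonical P 0 by exists [::], (fun _ => 0); rewrite big_nil.
elim=> [|a1 a2 _ can1 _ [s [g [_ sP ->]]] | u p Pu] //.
  elim: s sP => [|v s IH] /=; first by rewrite big_nil addr0.
  move=> /andP [Pv sP]; rewrite big_cons addrCA addrC.
  by apply: canonical_add_term => //; apply: IH.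
by rewrite -[term u p]add0r; apply: canonical_add_term.
Qed.

Lemma is_degP a d :
  is_deg x y h a d <-> exists g r, [/\ g != 0, below d r & a = term d g + r].
Proof.
split.
  move=> [s [g [s_uniq ds gd_neq0 lt_d ->]]].
  exists (g d), (\sum_(u <- s | u != d) term u (g u)); split => //.
    rewrite big_seq_cond; apply: big_ind => [|? ?|u /andP [us u_neq_d]].
    - exact: spanned0.
    - exact: spannedD.
    - by apply: spanned_term; apply: lt_d.
  by rewrite (bigD1_seq d ds s_uniq).
move=> [g [r [g_neq0 /spanned_canonical [s [g' [s_uniq s_lt ->]]] ->]]].
have dNs : d \notin s by apply/negP => /(allP s_lt); rewrite /= lexlt_irr.
exists (d :: s), (fun u => if u == d then g else g' u); split.
- by rewrite /= dNs.
- exact: mem_head.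
- by rewrite eqxx.
- move=> t; rewrite in_cons => /predU1P [-> | ts]; first by rewrite eqxx.
  by move=> _; apply: (allP s_lt).
rewrite big_cons eqxx; congr (_ + _); apply: eq_big_seq => u us.
by have /negbTE -> : u != d by apply: contraNneq dNs => <-.
Qed.

Section NonConstant.

Hypothesis f_nonconst : (1 < size f)%N.

Lemma tw_neq0 k p : p != 0 -> tw k p != 0.
Proof. by move=> p_neq0; elim: k => //= k IH; rewrite comp_poly_eq0. Qed.

Lemma is_deg_mul a b d1 d2 : is_deg x y h a d1 -> is_deg x y h b d2 ->
  is_deg x y h (a * b) (padd d1 d2).
Proof.
move=> /is_degP [g [r [g_neq0 r_low a_def]]] /is_degP [k [r' [k_neq0 r'_low b_def]]].
have a_le : spanned (fun u => lexle u d1) a.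
  rewrite a_def; apply: spannedD; first by apply: spanned_term; rewrite /lexle eqxx orbT.
  by apply: spanned_mono r_low => u u_lt; rewrite /lexle u_lt.
have t2_le : spanned (fun u => lexle u d2) (term d2 k).
  by apply: spanned_term; rewrite /lexle eqxx orbT.
have [r0 r0_low lead] := term_mul d1 g d2 k.
have -> : a * b = term d1 g * term d2 k + (a * r' + r * term d2 k).
  by rewrite b_def mulrDr {1}a_def mulrDl -addrA (addrC (r * _)).
rewrite lead -addrA; apply/is_degP.
exists (tw d2.1 g * tw d1.2 k), (r0 + (a * r' + r * term d2 k)); split=> //.
  by rewrite mulf_neq0 // tw_neq0.
apply: spannedD; first by apply: lowx_below r0_low.
apply: spannedD.
  apply: spanned_mul a_le r'_low => u v u_le v_lt.
  by apply: lexlt_padd; rewrite // /lexle v_lt ?orbT.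
apply: spanned_mul r_low t2_le => u v u_lt v_le.
by apply: lexlt_padd; rewrite // /lexle u_lt.
Qed.

End NonConstant.

Section Basis.

Hypothesis span : forall a : A,
  exists (s : seq (nat * nat * nat)) (c : nat * nat * nat -> C),
    a = \sum_(t <- s) c t *: mon x y h t.
Hypothesis free : forall (s : seq (nat * nat * nat)) (c : nat * nat * nat -> C),
  uniq s -> \sum_(t <- s) c t *: mon x y h t = 0 -> forall t, t \in s -> c t = 0.

Lemma term_expand (u : nat * nat) (p : {poly C}) (n : nat) : (size p <= n)%N ->
  term u p = \sum_(0 <= k < n) p`_k *: mon x y h (u.1, k, u.2).
Proof.
move=> size_p.
have p_def : p = \sum_(k < n) p`_k *: 'X^k.
  rewrite -poly_def; apply/polyP => k; rewrite coef_poly; case: ltnP => // le_nk.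
  by rewrite nth_default // (leq_trans size_p).
rewrite /term {1}p_def big_mkord rmorph_sum /= mulr_sumr mulr_suml.
apply: eq_bigr => k _.
by rewrite linearZ /= rmorphXn /= horner_algX mulr_algl /mon -scalerAr -scalerAl.
Qed.

(* Terms with distinct exponents are linearly independent over C[h]:
   expanding every term in the monomial basis, the coefficients of g u are
   coefficients of distinct basis monomials. *)
Lemma terms_free (s : seq (nat * nat)) (g : nat * nat -> {poly C}) :
  uniq s -> \sum_(u <- s) term u (g u) = 0 -> forall u, u \in s -> g u = 0.
Proof.
move=> s_uniq sum0 u us.
pose n := \max_(v <- s) size (g v).
have size_g v : v \in s -> (size (g v) <= n)%N.
  by move=> vs; apply: (leq_bigmax_seq (F := fun v => size (g v))).
pose T := [seq (v.1, k, v.2) | v <- s, k <- index_iota 0 n].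
pose c (t : nat * nat * nat) := (g (t.1.1, t.2))`_t.1.2.
have T_uniq : uniq T.
  apply: allpairs_uniq => //; first exact: iota_uniq.
  by move=> [[v1 v2] k] [[w1 w2] l] _ _ /= [-> -> ->].
have cT0 : forall t, t \in T -> c t = 0.
  apply: free T_uniq _; rewrite -[RHS]sum0 big_allpairs_dep /=.
  apply: eq_big_seq => v vs; rewrite (term_expand _ _ _ (size_g v vs)).
  by apply: eq_bigr => k _; case: v {vs}.
apply/polyP => k; rewrite coef0.
have [lt_kn | le_nk] := ltnP k n; last by rewrite nth_default // (leq_trans (size_g u us)).
have := cT0 (u.1, k, u.2); rewrite /c /=; case: u us => u1 u2 us; apply.
by apply: (allpairs_f (fun v k => (v.1, k, v.2))) => //; rewrite mem_index_iota.
Qed.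

Lemma term_neq0 u p : p != 0 -> term u p != 0.
Proof.
apply: contra_neq => term0.
by apply: (terms_free [:: u] (fun=> p)) => //; [rewrite big_seq1 | exact: mem_head].
Qed.

Lemma deg_neq0 a d : is_deg x y h a d -> a != 0.
Proof.
move=> [s [g [s_uniq ds gd_neq0 _ a_def]]]; apply: contra_neq gd_neq0 => a0.
by apply: (terms_free s g) => //; rewrite -a_def.
Qed.

Lemma spanned_all a : spanned predT a.
Proof.
have [s [c ->]] := span a.
apply: big_ind => [|b1 b2|t _]; [exact: spanned0 | exact: spannedD |].
have -> : c t *: mon x y h t = term (t.1.1, t.2) (c t *: 'X^(t.1.2)).
  by rewrite /term /mon linearZ /= rmorphXn /= horner_algX mulr_algl -scalerAr -scalerAl.
exact: spanned_term.
Qed.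

(* Every nonzero element has a degree: its lexicographically largest
   exponent with a nonzero coefficient. *)
Lemma deg_exists a : a != 0 -> exists d, is_deg x y h a d.
Proof.
move=> a_neq0.
have [s [g [s_uniq _ a_def]]] := spanned_canonical _ _ (spanned_all a).
set s' := [seq u <- s | g u != 0].
have a_def' : a = \sum_(u <- s') term u (g u).
  rewrite big_filter a_def [RHS]big_mkcond /=; apply: eq_bigr => u _.
  by case: eqP => // ->; rewrite /term rmorph0 mulr0 mul0r.
case s'_def: s' a_def' => [|u s''] a_def'.
  by move: a_neq0; rewrite a_def' big_nil eqxx.
have [d ds' d_max] := lexmax_exists u s''.
exists d, s', g; rewrite s'_def; split => //.
- by rewrite -s'_def filter_uniq.
- by move: ds'; rewrite -s'_def mem_filter => /andP [].
Qed.

Lemma const_zero_divisor c : f = c%:P ->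
  exists a b : A, [/\ a != 0, b != 0 & a * b = 0].
Proof.
move=> f_const; exists (h - c%:A), x; split.
- have -> : h - c%:A = term (0, 0)%N ('X - c%:P).
    by rewrite /term !expr0 mul1r mulr1 rmorphB /= horner_algX horner_algC.
  by rewrite term_neq0 // polyXsubC_eq0.
- have -> : x = term (1, 0)%N 1 by rewrite /term expr1 expr0 rmorph1 !mulr1.
  by rewrite term_neq0 // oner_eq0.
- by rewrite mulrBl hx f_const horner_algC mulr_algr mulr_algl subrr.
Qed.

End Basis.

End HfComputations.

Lemma nonconst_size (C : numClosedFieldType) (f : {poly C}) :
  ~ is_const f -> (1 < size f)%N.
Proof.
move=> f_nonconst; rewrite ltnNge; apply/negP => /size1_polyC f_const.
by apply: f_nonconst; exists f`_0.
Qed.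

Theorem lemma2 (C : numClosedFieldType) (f : {poly C}) (A : algType C) (x y h : A) :
  Hrel f x y h -> PBW_basis x y h ->
  (~ is_const f ->
     forall (a b : A) (d1 d2 : nat * nat), a != 0 -> b != 0 ->
       is_deg x y h a d1 -> is_deg x y h b d2 ->
       is_deg x y h (a * b) (d1.1 + d2.1, d1.2 + d2.2)%N)
  /\ ((forall a b : A, a * b = 0 -> a = 0 \/ b = 0) <-> ~ is_const f).
Proof.
move=> [hx yh yx] [span free].
have deg_add : ~ is_const f -> forall a b d1 d2, is_deg x y h a d1 -> is_deg x y h b d2 ->
    is_deg x y h (a * b) (padd d1 d2).
  by move=> /nonconst_size f_nonconst; exact: is_deg_mul hx yh yx f_nonconst.
split; first by move=> f_nonconst a b d1 d2 _ _; apply: deg_add.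
split.
  move=> domain [c f_const].
  have [a [b [a_neq0 b_neq0 ab0]]] := const_zero_divisor hx free _ f_const.
  by case: (domain a b ab0) => /eqP; apply/negP.
move=> f_nonconst a b ab0.
have [-> | a_neq0] := eqVneq a 0; first by left.
have [-> | b_neq0] := eqVneq b 0; first by right.
have [d1 a_d1] := deg_exists span _ a_neq0.
have [d2 b_d2] := deg_exists span _ b_neq0.
by have := deg_neq0 free _ _ (deg_add f_nonconst a b d1 d2 a_d1 b_d2); rewrite ab0 eqxx.
Qed.
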